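(* For each $\eta\in(0,\eta_4)$ we have $\mathrm{Re}\,z_0,\ \mathrm{Re}\,w_1,\ \mathrm{Im}\,w_1\in(0,1)$.
   Context: For $\eta\in(0,\pi/3)$ let $a=\frac{e^{-i\eta}}{2\cos\eta}$, $c=\frac{1}{1-|a|^4}$, $z_0=ca$, $w_1=1-c|a|^2a$. Let $\Phi_4(\eta)=(1-|a|^4)\sin3\eta-|a|^3\sin2\eta+|a|^4\sin\eta$; it has a unique zero in $(\pi/4,\pi/3)$, denoted $\eta_4$. *)

From Stdlib Require Import Reals.
From Coquelicot Require Import Coquelicot.
Open Scope R_scope.

Definition expmi (eta : R) : C := (cos eta, - sin eta).

Definition a_of (eta : R) : C := Cmult (RtoC (/ (2 * cos eta))) (expmi eta).

Definition absa (eta : R) : R := Cmod (a_of eta).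

Definition c_of (eta : R) : R := / (1 - absa eta ^ 4).

Definition z0_of (eta : R) : C := Cmult (RtoC (c_of eta)) (a_of eta).

Definition w1_of (eta : R) : C :=
  Cminus (RtoC 1) (Cmult (RtoC (c_of eta * absa eta ^ 2)) (a_of eta)).

Definition Phi4 (eta : R) : R :=
  (1 - absa eta ^ 4) * sin (3 * eta) - absa eta ^ 3 * sin (2 * eta)
  + absa eta ^ 4 * sin eta.

From Stdlib Require Import Reals Lra Psatz.
From Coquelicot Require Import Coquelicot.
Open Scope R_scope.

(* With k = |a| = 1/(2 cos eta) we have Re a = 1/2 and Im a = -k sin eta, so
   Re z0 = c/2, Re w1 = 1 - c k^2/2 and Im w1 = c k^3 sin eta with c = 1/(1 - k^4).
   Moreover k^2 Phi_4 = sin eta (1 - k^2)(1 - 2 k^4), so eta_4 is the angle where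
   2 k^4 = 1; as k increases with eta, k^4 < 1/2 on (0, eta_4), whence 0 < c < 2.
   This gives the two real parts at once, and Im w1 < 1 amounts to
   k^3 sin eta < 1 - k^4, which follows by squaring since (k sin eta)^2 = k^2 - 1/4. *)

Lemma Cmod_expmi (eta : R) : Cmod (expmi eta) = 1.
Proof.
  unfold Cmod, expmi; cbn [fst snd].
  replace (cos eta ^ 2 + (- sin eta) ^ 2) with 1
    by (rewrite <- (sin2_cos2 eta); unfold Rsqr; ring).
  apply sqrt_1.
Qed.

Lemma sin_3a (t : R) : sin (3 * t) = sin t * (4 * cos t ^ 2 - 1).
Proof.
  replace (3 * t) with (2 * t + t) by ring.
  rewrite sin_plus, sin_2a, cos_2a_cos; ring.
Qed.

Section FixedAngle.

Variable eta : R.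
Hypothesis cos_pos : 0 < cos eta.

Lemma absa_inv_cos : absa eta = / (2 * cos eta).
Proof.
  unfold absa, a_of.
  rewrite Cmod_mult, Cmod_R, Cmod_expmi, Rmult_1_r, Rabs_pos_eq; [reflexivity|].
  apply Rlt_le, Rinv_0_lt_compat; lra.
Qed.

Lemma absa_gt0 : 0 < absa eta.
Proof. rewrite absa_inv_cos; apply Rinv_0_lt_compat; lra. Qed.

Lemma a_of_eq : a_of eta = (/ 2, - (absa eta * sin eta)).
Proof.
  rewrite absa_inv_cos; unfold a_of, expmi, Cmult, RtoC; simpl.
  f_equal; field; lra.
Qed.

Lemma Re_z0 : Re (z0_of eta) = c_of eta / 2.
Proof. unfold z0_of; rewrite a_of_eq; unfold Cmult, RtoC, Re; simpl; field. Qed.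

Lemma Re_w1 : Re (w1_of eta) = 1 - c_of eta * absa eta ^ 2 / 2.
Proof.
  unfold w1_of; rewrite a_of_eq.
  unfold Cminus, Cplus, Copp, Cmult, RtoC, Re; simpl; field.
Qed.

Lemma Im_w1 : Im (w1_of eta) = c_of eta * absa eta ^ 3 * sin eta.
Proof.
  unfold w1_of; rewrite a_of_eq.
  unfold Cminus, Cplus, Copp, Cmult, RtoC, Im; simpl; ring.
Qed.

Lemma Phi4_factor :
  absa eta ^ 2 * Phi4 eta = sin eta * (1 - absa eta ^ 2) * (1 - 2 * absa eta ^ 4).
Proof.
  unfold Phi4; rewrite sin_3a, sin_2a, absa_inv_cos.
  field; lra.
Qed.

Hypothesis absa_pow4_lt : absa eta ^ 4 < 1 / 2.

Lemma c_of_bounds : 0 < c_of eta < 2.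
Proof.
  unfold c_of; split.
  - apply Rinv_0_lt_compat; lra.
  - rewrite <- (Rinv_inv 2); apply Rinv_lt_contravar; nra.
Qed.

Lemma absa_cube_sin_lt : 0 <= sin eta -> absa eta ^ 3 * sin eta < 1 - absa eta ^ 4.
Proof.
  intros sin_ge0.
  pose proof absa_gt0 as k_gt0.
  assert (ksin_sq : (absa eta * sin eta) ^ 2 = absa eta ^ 2 - / 4).
  { assert (sin_sq : sin eta ^ 2 = 1 - cos eta ^ 2)
      by (rewrite <- (sin2_cos2 eta); unfold Rsqr; ring).
    rewrite Rpow_mult_distr, sin_sq, absa_inv_cos; field; lra. }
  set (u := absa eta ^ 2).
  assert (u_bounds : 0 < u /\ u ^ 2 < 1 / 2) by (unfold u; split; nra).
  assert (sq_lt : (absa eta ^ 3 * sin eta) ^ 2 < (1 - absa eta ^ 4) ^ 2).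
  { replace ((absa eta ^ 3 * sin eta) ^ 2) with (u ^ 2 * (u - / 4))
      by (unfold u; rewrite <- ksin_sq; ring).
    replace (absa eta ^ 4) with (u ^ 2) by (unfold u; ring).
    nra. }
  apply Rsqr_incrst_0; unfold Rsqr; nra.
Qed.

End FixedAngle.

Lemma absa_pow4_of_Phi4_root (eta : R) :
  0 < eta < PI / 3 -> Phi4 eta = 0 -> 2 * absa eta ^ 4 = 1.
Proof.
  intros Heta Hroot.
  pose proof PI_RGT_0.
  assert (cos_gt_half : 1 / 2 < cos eta)
    by (rewrite <- cos_PI3; apply cos_decreasing_1; lra).
  assert (sin_gt0 : 0 < sin eta) by (apply sin_gt_0; lra).
  assert (absa_lt1 : absa eta < 1).
  { rewrite absa_inv_cos by lra; rewrite <- Rinv_1; apply Rinv_lt_contravar; lra. }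
  pose proof (absa_gt0 eta ltac:(lra)) as absa_pos.
  pose proof (Phi4_factor eta ltac:(lra)) as factor.
  rewrite Hroot, Rmult_0_r in factor.
  destruct (Rmult_integral _ _ (eq_sym factor)) as [vanish | vanish]; [| lra].
  destruct (Rmult_integral _ _ vanish); nra.
Qed.

Lemma absa_increasing (x y : R) : 0 <= x < y -> y < PI / 2 -> absa x < absa y.
Proof.
  intros Hxy Hy.
  pose proof PI_RGT_0.
  assert (cos_y_pos : 0 < cos y) by (apply cos_gt_0; lra).
  assert (cos_lt : cos y < cos x) by (apply cos_decreasing_1; lra).
  rewrite !absa_inv_cos by lra.
  apply Rinv_lt_contravar; nra.
Qed.

Theorem lemma5p1 (eta4 : R)
  (Heta4_int : PI / 4 < eta4 < PI / 3)
  (Heta4_zero : Phi4 eta4 = 0)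
  (Heta4_uniq : forall x : R, PI / 4 < x < PI / 3 -> Phi4 x = 0 -> x = eta4) :
  forall eta : R, 0 < eta < eta4 ->
    (0 < Re (z0_of eta) < 1) /\
    (0 < Re (w1_of eta) < 1) /\
    (0 < Im (w1_of eta) < 1).
Proof.
  intros eta Heta.
  pose proof PI_RGT_0.
  assert (cos_pos : 0 < cos eta) by (apply cos_gt_0; lra).
  assert (sin_pos : 0 < sin eta) by (apply sin_gt_0; lra).
  assert (k4_root : 2 * absa eta4 ^ 4 = 1)
    by (apply absa_pow4_of_Phi4_root; [lra | assumption]).
  pose proof (absa_gt0 eta cos_pos) as k_pos.
  assert (k_lt : absa eta < absa eta4) by (apply absa_increasing; lra).
  assert (k4_lt : absa eta ^ 4 < 1 / 2).
  { assert (absa eta ^ 2 < absa eta4 ^ 2) by nra; nra. }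
  pose proof (c_of_bounds eta k4_lt) as c_bounds.
  pose proof (absa_cube_sin_lt eta cos_pos k4_lt ltac:(lra)) as cube_lt.
  assert (c_inv : c_of eta * (1 - absa eta ^ 4) = 1)
    by (unfold c_of; field; lra).
  rewrite Re_z0, Re_w1, Im_w1 by assumption.
  assert (k_cube_pos : 0 < absa eta ^ 3) by (apply pow_lt; lra).
  repeat split; nra.
Qed.
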